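(* Consider a stochastic block model with $K$ communities, membership matrix $\Theta\in\mathbb M_{n,K}$ with community sizes $n_1,\dots,n_K\ge1$, and symmetric $B\in[0,1]^{K\times K}$ with $\mathrm{rank}(B)=K'<K$. Let $P=\Theta B\Theta^\intercal=U\Sigma U^\intercal$ be its eigenvalue decomposition with $U\in\mathbb R^{n\times K'}$ having orthonormal columns. Let $\Delta=\mathrm{diag}(\sqrt{n_1},\dots,\sqrt{n_K})$ and $\Delta B\Delta=LDL^\intercal$ the eigenvalue decomposition with $L\in\mathbb R^{K\times K'}$. Suppose there exist deterministic sequences $\{\eta_n\}$ and $\{\iota_n\}$ such that $$\min_{1\le k<l\le K}B_{kk}+B_{ll}-2B_{kl}\ge\eta_n>0$$ and $0<\Sigma_{ii}\le\iota_n$ for all $1\le i\le K'$. Then $\min_{k\ne l}\|L_{k\ast}/\sqrt{n_k}-L_{l\ast}/\sqrt{n_l}\|_2\ge\xi_n$ with $\xi_n=\sqrt{\eta_n/\iota_n}$.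
   Context: $\mathbb M_{n,K}$: $n\times K$ 0/1 matrices with exactly one $1$ per row; $n_k$ is the number of rows with their $1$ in column $k$. $M_{k\ast}$ denotes the $k$-th row of $M$. *)

From HB Require Import structures.
From mathcomp Require Import all_boot all_order all_algebra.
From mathcomp Require Import reals.
Set Implicit Arguments. Unset Strict Implicit. Unset Printing Implicit Defensive.
Import Order.TTheory GRing.Theory Num.Theory.
Local Open Scope ring_scope.

Definition is_membership (R : realType) (n K : nat) (Theta : 'M[R]_(n, K)) :=
  forall i : 'I_n, exists k : 'I_K, forall j : 'I_K, Theta i j = (j == k)%:R.

Definition comm_size (R : realType) (n K : nat) (Theta : 'M[R]_(n, K)) (k : 'I_K)
  : nat := #|[set i : 'I_n | Theta i k == 1]|.

Definition Delta_mx (R : realType) (n K : nat) (Theta : 'M[R]_(n, K)) : 'M[R]_K :=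
  diag_mx (\row_k Num.sqrt ((comm_size Theta k)%:R)).

Definition vnorm (R : realType) (m : nat) (v : 'rV[R]_m) : R :=
  Num.sqrt (\sum_(j < m) v 0 j ^+ 2).

From HB Require Import structures.
From mathcomp Require Import all_boot all_order all_algebra.
From mathcomp Require Import reals ring.
Set Implicit Arguments.
Unset Strict Implicit.
Unset Printing Implicit Defensive.
Import Order.TTheory GRing.Theory Num.Theory.
Local Open Scope ring_scope.

(* Put X := Theta Delta^-1 L.  Then X^T X = 1 and P = X D X^T, while
   B = (Delta^-1 L) D (Delta^-1 L)^T.  For the scaled row difference
   w := (e_k - e_l) Delta^-1 L this gives eta <= (e_k - e_l) B (e_k - e_l)^T
   = w D w^T.  Lifting w to y := w X^T in R^n preserves both |w| and the
   quadratic form, so w D w^T = y P y^T = (y U) Sigma (y U)^T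
   <= iota |y U|^2 <= iota |y|^2 = iota |w|^2, the last step by Bessel. *)

Definition sqnorm (R : pzRingType) m (v : 'rV[R]_m) : R := (v *m v^T) 0 0.

Definition qform (R : pzRingType) m (A : 'M[R]_m) (v : 'rV[R]_m) : R :=
  (v *m A *m v^T) 0 0.

Lemma sqnormE (R : comPzRingType) m (v : 'rV[R]_m) :
  sqnorm v = \sum_(j < m) v 0 j ^+ 2.
Proof. by rewrite /sqnorm mxE; apply: eq_bigr => j _; rewrite mxE expr2. Qed.

Lemma sqnorm_ge0 (R : realDomainType) m (v : 'rV[R]_m) : 0 <= sqnorm v.
Proof. by rewrite sqnormE sumr_ge0 // => j _; apply: sqr_ge0. Qed.

Lemma vnormE (R : realType) m (v : 'rV[R]_m) : vnorm v = Num.sqrt (sqnorm v).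
Proof. by rewrite sqnormE. Qed.

Lemma qform_mulmx (R : comPzRingType) m p (A : 'M[R]_(p, m)) (M : 'M[R]_m)
    (v : 'rV[R]_p) :
  qform (A *m M *m A^T) v = qform M (v *m A).
Proof. by rewrite /qform trmx_mul !mulmxA. Qed.

Lemma sqnorm_mul_isometry (R : comPzRingType) m p (X : 'M[R]_(p, m))
    (w : 'rV[R]_m) :
  X^T *m X = 1%:M -> sqnorm (w *m X^T) = sqnorm w.
Proof.
by move=> XtX; rewrite /sqnorm trmx_mul trmxK mulmxA -(mulmxA w) XtX mulmx1.
Qed.

Lemma sqnorm_mul_orthonormal_le (R : realDomainType) m p (U : 'M[R]_(m, p))
    (y : 'rV[R]_m) :
  U^T *m U = 1%:M -> sqnorm (y *m U) <= sqnorm y.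
Proof.
move=> UtU; set u := y *m U.
have yPy : y *m (u *m U^T)^T = u *m u^T by rewrite trmx_mul trmxK mulmxA.
have Pyy : u *m U^T *m y^T = u *m u^T by rewrite -mulmxA -trmx_mul.
have PyPy : u *m U^T *m (u *m U^T)^T = u *m u^T.
  by rewrite trmx_mul trmxK mulmxA -(mulmxA u) UtU mulmx1.
have := sqnorm_ge0 (y - u *m U^T).
rewrite /sqnorm raddfB /= mulmxBl !mulmxBr yPy Pyy PyPy subrr subr0.
by rewrite !mxE subr_ge0.
Qed.

Lemma qform_diag_le (R : realDomainType) m (s : 'rV[R]_m) (c : R)
    (u : 'rV[R]_m) :
  (forall j, s 0 j <= c) -> qform (diag_mx s) u <= c * sqnorm u.
Proof.
move=> s_le; rewrite /qform mul_mx_diag sqnormE mxE mulr_sumr.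
apply: ler_sum => j _; rewrite !mxE mulrAC -expr2 mulrC.
by apply: ler_wpM2r; [apply: sqr_ge0 | apply: s_le].
Qed.

Lemma qform_delta_sub (R : comPzRingType) m (A : 'M[R]_m) (k l : 'I_m) :
  qform A (delta_mx 0 k - delta_mx 0 l) = A k k + A l l - A k l - A l k.
Proof.
have qd i j :
    (delta_mx (0 : 'I_1) i *m A *m (delta_mx (0 : 'I_1) j)^T) 0 0 = A i j.
  by rewrite -rowE trmx_delta -colE !mxE.
have mxB00 (X Y : 'M[R]_1) : (X - Y) 0 0 = X 0 0 - Y 0 0 by rewrite !mxE.
rewrite /qform raddfB /= mulmxBl !mulmxBr !mulmxBl !mxB00 !qd; ring.
Qed.

Lemma delta_sub_mul_diag (R : comPzRingType) m p (s : 'rV[R]_m)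
    (A : 'M[R]_(m, p)) (k l : 'I_m) :
  (delta_mx 0 k - delta_mx 0 l) *m diag_mx s *m A
  = s 0 k *: row k A - s 0 l *: row l A.
Proof. by rewrite !mulmxBl -!rowE !row_diag_mx -!scalemxAl -!rowE. Qed.

Lemma mulmx_diag_inv (F : fieldType) m (s : 'rV[F]_m) :
  (forall j, s 0 j != 0) -> diag_mx (map_mx GRing.inv s) *m diag_mx s = 1%:M.
Proof.
move=> s_neq0; rewrite mulmx_diag -diag_const_mx; congr diag_mx.
by apply/rowP => j; rewrite !mxE mulVf.
Qed.

Lemma sqrt_div_le (R : rcfType) (e i s : R) :
  0 < e -> 0 <= s -> e <= i * s -> Num.sqrt (e / i) <= Num.sqrt s.
Proof.
move=> e_gt0 s_ge0 e_le; have i_gt0 : 0 < i.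
  rewrite ltNge; apply: contraTN e_le => i_le0.
  by rewrite -ltNge (le_lt_trans _ e_gt0) // mulr_le0_ge0.
by apply: ler_wsqrtr; rewrite ler_pdivrMr // mulrC.
Qed.

Lemma membership_gram (R : realType) n K (Theta : 'M[R]_(n, K)) :
  is_membership Theta ->
  Theta^T *m Theta = diag_mx (\row_k (comm_size Theta k)%:R).
Proof.
move=> Theta_memb; apply/matrixP => p q; rewrite !mxE.
have entry i : Theta^T p i * Theta i q = ((p == q) && (Theta i p == 1))%:R.
  have [k Theta_i] := Theta_memb i.
  have natr_eq1 (b : bool) : (b%:R == 1 :> R) = b.
    by case: b; rewrite ?eqxx // eq_sym oner_eq0.
  rewrite mxE !Theta_i natr_eq1 -natrM; congr (_%:R).
  by case: (eqVneq p k) => [->|_]; rewrite ?andbF // mul1n andbT eq_sym.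
under eq_bigr do rewrite entry.
case: (eqVneq p q) => [_|_]; last by rewrite big1 // => i _; rewrite mulr0n.
rewrite mulr1n /comm_size -sum1_card natr_sum [RHS]big_mkcond /=.
by apply: eq_bigr => i _; rewrite inE; case: (_ == 1).
Qed.

Section BlockModel.

Variables (R : realType) (n K K' : nat) (Theta : 'M[R]_(n, K)) (B : 'M[R]_K).
Variables (L : 'M[R]_(K, K')) (d : 'rV[R]_K').
Hypotheses (Theta_memb : is_membership Theta)
  (comm_size_gt0 : forall k, (0 < comm_size Theta k)%N)
  (LtL : L^T *m L = 1%:M)
  (DBD_eig : Delta_mx Theta *m B *m Delta_mx Theta = L *m diag_mx d *m L^T).

Definition Delta_inv : 'M[R]_K :=
  diag_mx (map_mx GRing.inv (\row_k Num.sqrt (comm_size Theta k)%:R)).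

Lemma tr_Delta_inv : Delta_inv^T = Delta_inv.
Proof. exact: tr_diag_mx. Qed.

Lemma Delta_invK : Delta_inv *m Delta_mx Theta = 1%:M.
Proof.
by apply: mulmx_diag_inv => k; rewrite mxE sqrtr_eq0 -ltNge ltr0n.
Qed.

Lemma Delta_mxK : Delta_mx Theta *m Delta_inv = 1%:M.
Proof. by rewrite diag_mxC Delta_invK. Qed.

Lemma Delta_mx_sqr : Delta_mx Theta *m Delta_mx Theta = Theta^T *m Theta.
Proof.
rewrite membership_gram // mulmx_diag; congr diag_mx.
by apply/rowP => k; rewrite !mxE -expr2 sqr_sqrtr // ler0n.
Qed.

Lemma B_eig : B = Delta_inv *m L *m diag_mx d *m (Delta_inv *m L)^T.
Proof.
have {1}-> :
    B = Delta_inv *m (Delta_mx Theta *m B *m Delta_mx Theta) *m Delta_inv.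
  by rewrite !mulmxA Delta_invK mul1mx -mulmxA Delta_mxK mulmx1.
by rewrite DBD_eig trmx_mul tr_Delta_inv !mulmxA.
Qed.

Definition P_eigvecs : 'M[R]_(n, K') := Theta *m Delta_inv *m L.

Lemma P_eigvecs_orthonormal : P_eigvecs^T *m P_eigvecs = 1%:M.
Proof.
rewrite /P_eigvecs !trmx_mul tr_Delta_inv !mulmxA -(mulmxA _ Theta^T).
rewrite -Delta_mx_sqr !mulmxA -(mulmxA L^T Delta_inv) Delta_invK mulmx1.
by rewrite -(mulmxA _ (Delta_mx Theta)) Delta_mxK mulmx1 LtL.
Qed.

Lemma P_eig : Theta *m B *m Theta^T = P_eigvecs *m diag_mx d *m P_eigvecs^T.
Proof. by rewrite {1}B_eig /P_eigvecs !trmx_mul !mulmxA. Qed.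

Lemma scaled_row_sub (k l : 'I_K) :
  (Num.sqrt (comm_size Theta k)%:R)^-1 *: row k L
  - (Num.sqrt (comm_size Theta l)%:R)^-1 *: row l L
  = (delta_mx 0 k - delta_mx 0 l) *m Delta_inv *m L.
Proof. by rewrite delta_sub_mul_diag !mxE. Qed.

End BlockModel.

Theorem lemma2 (R : realType) (n K K' : nat)
  (Theta : 'M[R]_(n, K)) (B : 'M[R]_K)
  (U : 'M[R]_(n, K')) (sigma : 'rV[R]_K')
  (L : 'M[R]_(K, K')) (d : 'rV[R]_K')
  (eta iota : R) :
  is_membership Theta ->
  (forall k : 'I_K, (0 < comm_size Theta k)%N) ->
  B^T = B ->
  (forall k l : 'I_K, 0 <= B k l <= 1) ->
  \rank B = K' ->
  (K' < K)%N ->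
  (* P = Theta B Theta^T = U Sigma U^T, U with orthonormal columns *)
  U^T *m U = 1%:M ->
  Theta *m B *m Theta^T = U *m diag_mx sigma *m U^T ->
  (* Delta B Delta = L D L^T, L with orthonormal columns *)
  L^T *m L = 1%:M ->
  Delta_mx Theta *m B *m Delta_mx Theta = L *m diag_mx d *m L^T ->
  0 < eta ->
  (forall k l : 'I_K, (k < l)%N -> eta <= B k k + B l l - 2 * B k l) ->
  (forall i : 'I_K', 0 < sigma 0 i <= iota) ->
  forall k l : 'I_K, k != l ->
    Num.sqrt (eta / iota) <=
    vnorm ((Num.sqrt ((comm_size Theta k)%:R))^-1 *: row k L
           - (Num.sqrt ((comm_size Theta l)%:R))^-1 *: row l L).
Proof.
move=> Theta_memb size_gt0 B_sym _ _ _ UtU P_eigU LtL DBD_eig eta_gt0 B_sep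
  sigma_bnd k l kl.
have X_orth := P_eigvecs_orthonormal Theta_memb size_gt0 LtL.
set X := P_eigvecs Theta L in X_orth.
set a : 'rV[R]_K := delta_mx 0 k - delta_mx 0 l.
set w := a *m Delta_inv Theta *m L.
set y := w *m X^T.
have eta_le_qform : eta <= qform B a.
  have Blk : B l k = B k l by rewrite -[in LHS]B_sym mxE.
  rewrite qform_delta_sub Blk; case: (ltngtP k l) => [kl'|lk|/val_inj kl'].
  - by rewrite -addrA -opprD -mulr2n -mulr_natl; apply: B_sep.
  - rewrite -addrA -opprD -mulr2n -mulr_natl (addrC (B k k)) -Blk.
    exact: B_sep.
  - by rewrite kl' eqxx in kl.
have qform_chain : qform B a = qform (diag_mx sigma) (y *m U).
  have yX : y *m X = w by rewrite /y -mulmxA X_orth mulmx1.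
  rewrite (B_eig size_gt0 DBD_eig) qform_mulmx mulmxA -/w -yX.
  by rewrite -qform_mulmx -(P_eig size_gt0 DBD_eig) P_eigU qform_mulmx.
have eta_le : eta <= iota * sqnorm (y *m U).
  rewrite (le_trans eta_le_qform) // qform_chain.
  by apply: qform_diag_le => j; case/andP: (sigma_bnd j).
rewrite scaled_row_sub vnormE.
apply: le_trans (sqrt_div_le eta_gt0 (sqnorm_ge0 _) eta_le) _.
rewrite ler_wsqrtr // -(sqnorm_mul_isometry w X_orth).
exact: sqnorm_mul_orthonormal_le.
Qed.
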